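(* Let $\mathscr{H}=\mathscr{H}_L\oplus\mathscr{H}_C\oplus\mathscr{H}_R$ be an orthogonal decomposition of a Hilbert space, and let $U$ be a unitary operator on $\mathscr{H}$ of the form $U=(U_{LC}\oplus\mathbb{1}_{\mathscr{H}_R})(\mathbb{1}_{\mathscr{H}_L}\oplus U_{CR})$, where $U_{LC}$ is unitary on $\mathscr{H}_{LC}=\mathscr{H}_L\oplus\mathscr{H}_C$ and $U_{CR}$ is unitary on $\mathscr{H}_{CR}=\mathscr{H}_C\oplus\mathscr{H}_R$. Let $V=V_L\oplus\mathscr{H}_C\oplus V_R$ where $V_L\subset\mathscr{H}_L$ and $V_R\subset\mathscr{H}_R$ are closed subspaces, and put $V_{LC}=V_L\oplus\mathscr{H}_C$, $V_{CR}=\mathscr{H}_C\oplus V_R$. Then the $U$-Schur function $f_V$ of $V$ factorizes as $$f_V=(\mathbb{1}_{V_L}\oplus f^R_{V_{CR}})(f^L_{V_{LC}}\oplus\mathbb{1}_{V_R}),$$ where $f^L_{V_{LC}}$ is the $U_{LC}$-Schur function of $V_{LC}$ and $f^R_{V_{CR}}$ is the $U_{CR}$-Schur function of $V_{CR}$. In particular, the $U$-Schur function of $\mathscr{H}_C$ satisfies $f_{\mathscr{H}_C}=f^R_{\mathscr{H}_C}f^L_{\mathscr{H}_C}$.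
   Context: For a unitary operator $W$ on a Hilbert space $\mathscr{K}$ and a closed subspace $S\subset\mathscr{K}$ with orthogonal projection $P$, the $W$-Carathéodory function of $S$ is $F_S(z)=P(W+z\mathbb{1})(W-z\mathbb{1})^{-1}P$ restricted to $S$ ($z$ in the open unit disk $\mathbb{D}$), and the $W$-Schur function of $S$ is the analytic function on $\mathbb{D}$ with values in operators on $S$ given by $f_S(z)=z^{-1}(F_S(z)-\mathbb{1}_S)(F_S(z)+\mathbb{1}_S)^{-1}$ (equivalently, $f_S(z)=P(W-z(\mathbb{1}-P))^{-1}P$ restricted to $S$). All functions in the factorization are regarded as operators on $V$, with direct sums taken with respect to $V=V_L\oplus V_{CR}=V_{LC}\oplus V_R$; $\mathbb{1}_X$ is the identity on $X$. *)

From Stdlib Require Import ClassicalEpsilon.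
From mathcomp Require Import all_boot all_algebra.
From mathcomp Require Import reals.
From mathcomp.real_closed Require Import complex.
Import GRing.Theory Num.Theory.
Set Implicit Arguments. Unset Strict Implicit. Unset Printing Implicit Defensive.
Local Open Scope ring_scope.

Section Hilbert.
Variables (R : realType) (H : lmodType R[i]) (ip : H -> H -> R[i]).

Definition is_hilbert : Prop :=
  [/\ (forall (a : R[i]) x y w, ip (a *: x + y) w = a * ip x w + ip y w),
      (forall x y, ip y x = (ip x y)^*),
      (forall x, 0 <= ip x x),
      (forall x, ip x x = 0 -> x = 0) &
      (forall u : nat -> H,
        (forall e : R, 0 < e -> exists N, forall m n, (N <= m)%N -> (N <= n)%N ->
           `|ip (u m - u n) (u m - u n)| < (e%:C)%C) ->
        exists l : H, forall e : R, 0 < e -> exists N, forall n, (N <= n)%N ->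
           `|ip (u n - l) (u n - l)| < (e%:C)%C)].

(* Closed subspaces are represented by their orthogonal projections. *)
Definition orthproj (P : H -> H) : Prop :=
  [/\ (forall (a : R[i]) x y, P (a *: x + y) = a *: P x + P y),
      (forall x, P (P x) = P x) &
      (forall x y, ip (P x) y = ip x (P y))].

Definition inS (P : H -> H) (x : H) : Prop := P x = x.

(* W is a unitary operator on the closed subspace K (projection PK);
   the values of W outside K are irrelevant. *)
Definition unitary_on (PK W : H -> H) : Prop :=
  [/\ (forall (a : R[i]) x y, inS PK x -> inS PK y -> W (a *: x + y) = a *: W x + W y),
      (forall x, inS PK x -> inS PK (W x)),
      (forall x y, inS PK x -> inS PK y -> ip (W x) (W y) = ip x y) &
      (forall y, inS PK y -> exists x, inS PK x /\ W x = y)].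

(* W-Schur function of the closed subspace S (projection P) of the Hilbert
   space K (projection PK), W unitary on K:
     f_S(z) = P (W - z (1_K - P))^{-1} P  restricted to S. *)
Definition schur (PK W P : H -> H) (z : R[i]) (x : H) : H :=
  P (epsilon (inhabits 0) (fun y => inS PK y /\ W y - z *: (y - P y) = x)).

End Hilbert.

(* [f_S(z) x] is [P_S y] for the solution [y] of the resolvent equation
   [W y - z (y - P_S y) = x]. For [|z| < 1] this equation has exactly one
   solution in the space: uniqueness because [W] is isometric and
   [y |-> z (y - P_S y)] is a strict contraction, existence by the Banach fixed
   point theorem for [y |-> W^-1 (x + z (y - P_S y))]. The factorization then
   amounts to gluing solutions: if [a] solves the [U_LC]-equation for
   [P_{V_LC} x] and [b] solves the [U_CR]-equation for [(f^L (+) 1) x], then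
   [P_L a + b] solves the [U]-equation for [x], and its projection onto [V] is
   the right-hand side. *)

From Stdlib Require Import ClassicalEpsilon FunctionalExtensionality.
From mathcomp Require Import all_boot all_order all_algebra.
From mathcomp Require Import reals.
From mathcomp.real_closed Require Import complex.
From mathcomp Require Import ring lra.
Import Order.TTheory GRing.Theory Num.Theory.
Set Implicit Arguments. Unset Strict Implicit. Unset Printing Implicit Defensive.
Local Open Scope ring_scope.

Lemma geometric_lt (R : archiFieldType) (r C e : R) :
  0 <= r -> r < 1 -> 0 < e -> exists N, C * r ^+ N < e.
Proof.
move=> r_ge0 r_lt1 e0.
have [C_le0|C_gt0] := lerP C 0.
  by exists 0%N; rewrite expr0 mulr1 (le_lt_trans C_le0).
have [->|r_neq0] := eqVneq r 0; first by exists 1%N; rewrite expr1 mulr0.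
have r_gt0 : 0 < r by rewrite lt_neqAle eq_sym r_neq0.
(* [r = 1 / (1 + d)] and Bernoulli: [r^N <= 1 / (1 + N d)]. *)
pose d := r^-1 - 1.
have d_gt0 : 0 < d by rewrite subr_gt0 invf_gt1.
have rd : r * (1 + d) = 1 by rewrite addrC subrK mulfV // lt0r_neq0.
have bernoulli n : 1 + n%:R * d <= (1 + d) ^+ n.
  elim: n => [|n IH]; first by rewrite mul0r addr0 expr0.
  have : 0 <= n%:R * d by rewrite mulr_ge0 // ltW.
  rewrite exprS -natr1; nra.
have := archi_boundP (ltW (divr_gt0 C_gt0 (mulr_gt0 e0 d_gt0))).
set N := Num.bound _ => N_gt; exists N.
have CN : C < N%:R * (e * d) by rewrite -ltr_pdivrMr // mulr_gt0.
have rN : r ^+ N * (1 + d) ^+ N = 1 by rewrite -exprMn rd expr1n.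
have := bernoulli N; have : 0 < r ^+ N by rewrite exprn_gt0.
move: rN CN; set p := r ^+ N; set B := (1 + d) ^+ N => rN CN p_gt0 BN.
have Cp : C * p < N%:R * d * p * e by nra.
have : N%:R * d * p <= 1 - p by nra.
set q := N%:R * d * p in Cp * => qp.
have : q * e <= (1 - p) * e by rewrite ler_wpM2r // ltW.
have : 0 < p * e by rewrite mulr_gt0.
lra.
Qed.

Section LinearFun.
Variables (R : realType) (H : lmodType R[i]) (f : H -> H).
Hypothesis f_lin : linear f.

Lemma lin0 : f 0 = 0.
Proof.
have := f_lin 1 0 0; rewrite scaler0 addr0 scale1r => e.
by apply: (addrI (f 0)); rewrite addr0 -e.
Qed.

Lemma linD x y : f (x + y) = f x + f y.
Proof. by have := f_lin 1 x y; rewrite !scale1r. Qed.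

Lemma linZ a x : f (a *: x) = a *: f x.
Proof. by have := f_lin a x 0; rewrite !addr0 lin0 addr0. Qed.

Lemma linN x : f (- x) = - f x.
Proof. by rewrite -scaleN1r linZ scaleN1r. Qed.

Lemma linB x y : f (x - y) = f x - f y.
Proof. by rewrite linD linN. Qed.

End LinearFun.

Section InnerProduct.
Variables (R : realType) (H : lmodType R[i]) (ip : H -> H -> R[i]).
Hypothesis hilbertH : is_hilbert ip.

Lemma ipDZl a x y w : ip (a *: x + y) w = a * ip x w + ip y w.
Proof. by case: hilbertH. Qed.

Lemma ipC x y : ip y x = (ip x y)^*.
Proof. by case: hilbertH. Qed.

Lemma ip0l w : ip 0 w = 0.
Proof.
have := ipDZl 1 0 0 w; rewrite scaler0 addr0 mul1r => e.
by apply: (addrI (ip 0 w)); rewrite addr0 -e.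
Qed.

Lemma ipDl x y w : ip (x + y) w = ip x w + ip y w.
Proof. by rewrite -[x]scale1r ipDZl mul1r scale1r. Qed.

Lemma ipZl a x w : ip (a *: x) w = a * ip x w.
Proof. by rewrite -[a *: x]addr0 ipDZl ip0l addr0. Qed.

Lemma ipNl x w : ip (- x) w = - ip x w.
Proof. by rewrite -scaleN1r ipZl mulN1r. Qed.

Lemma ipDr x y w : ip w (x + y) = ip w x + ip w y.
Proof. by rewrite ipC ipDl rmorphD /= -!ipC. Qed.

Lemma ipZr a x w : ip w (a *: x) = a^* * ip w x.
Proof. by rewrite ipC ipZl rmorphM /= -ipC. Qed.

Lemma ip0r w : ip w 0 = 0.
Proof. by rewrite ipC ip0l conjC0. Qed.

Lemma ipNr x w : ip w (- x) = - ip w x.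
Proof. by rewrite -scaleN1r ipZr conjCN1 mulN1r. Qed.

Lemma ipBr x y w : ip w (x - y) = ip w x - ip w y.
Proof. by rewrite ipDr ipNr. Qed.

Definition normsq x : R := complex.Re (ip x x).

Lemma normsqE x : ip x x = (normsq x)%:C%C.
Proof.
have x_ge0 : 0 <= ip x x by case: hilbertH.
by rewrite [LHS]complexE (ger0_Im x_ge0) mulr0 addr0.
Qed.

Lemma normsq_ge0 x : 0 <= normsq x.
Proof. by rewrite -ler0c -normsqE; case: hilbertH. Qed.

Lemma normsq_eq0 x : normsq x = 0 -> x = 0.
Proof. by move=> x0; case: hilbertH => _ _ _ + _; apply; rewrite normsqE x0. Qed.

Lemma normsq_small_eq0 x : (forall e, 0 < e -> normsq x < e) -> x = 0.
Proof.
move=> small; apply: normsq_eq0; apply/eqP; rewrite eq_le normsq_ge0 andbT.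
by rewrite leNgt; apply/negP => /small; rewrite ltxx.
Qed.

Lemma normsq0 : normsq 0 = 0.
Proof. by rewrite /normsq ip0l. Qed.

Lemma normsqN x : normsq (- x) = normsq x.
Proof. by rewrite /normsq ipNl ipNr opprK. Qed.

Lemma normsq_distC x y : normsq (x - y) = normsq (y - x).
Proof. by rewrite -normsqN opprB. Qed.

Lemma normsqZ (c : R[i]) x :
  normsq (c *: x) = (complex.Re c ^+ 2 + complex.Im c ^+ 2) * normsq x.
Proof. by rewrite /normsq ipZl ipZr normsqE; case: c => c1 c2 /=; ring. Qed.

Lemma normsqDZ x y (c : R) :
  normsq (x + c%:C%C *: y) = normsq x + c * (2 * complex.Re (ip x y)) + c ^+ 2 * normsq y.
Proof.
rewrite /normsq ipDl !ipDr !ipZl !ipZr (ipC x y) !normsqE.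
by case: (ip x y) => u v /=; ring.
Qed.

Lemma normsqD_le x y (u : R) :
  0 < u -> normsq (x + y) <= (1 + u^-1) * normsq x + (1 + u) * normsq y.
Proof.
move=> u_gt0; have uV : u * u^-1 = 1 by rewrite mulfV // gt_eqF.
have := normsqDZ x y 1; rewrite scale1r => ->.
have := normsq_ge0 (x + (- u)%:C%C *: y); rewrite normsqDZ.
have := normsq_ge0 x; have := normsq_ge0 y; have : 0 < u^-1 by rewrite invr_gt0.
nra.
Qed.

Lemma normsqD_le2 x y : normsq (x + y) <= 2 * normsq x + 2 * normsq y.
Proof. by have := normsqD_le x y ltr01; rewrite invr1. Qed.

Lemma normsq_complete (u : nat -> H) :
  (forall e, 0 < e -> exists N, forall m n, (N <= m)%N -> (N <= n)%N ->
     normsq (u m - u n) < e) ->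
  exists l, forall e, 0 < e -> exists N, forall n, (N <= n)%N -> normsq (u n - l) < e.
Proof.
have normE w : `|ip w w| = (normsq w)%:C%C by rewrite normsqE ger0_norm // ler0c normsq_ge0.
case: hilbertH => _ _ _ _ complete cauchy.
case: (complete u) => [e e0|l conv].
  by have [N hN] := cauchy e e0; exists N => m n hm hn; rewrite normE ltcR hN.
exists l => e e0; have [N hN] := conv e e0.
by exists N => n hn; have := hN n hn; rewrite normE ltcR.
Qed.

Section OneProjection.
Variable P : H -> H.
Hypothesis P_proj : orthproj ip P.

Lemma orthproj_linear : linear P.
Proof. by case: P_proj. Qed.

Lemma orthproj_idem x : P (P x) = P x.
Proof. by case: P_proj. Qed.

Lemma orthproj_adj x y : ip (P x) y = ip x (P y).
Proof. by case: P_proj. Qed.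

Lemma inS_proj x : inS P (P x).
Proof. exact: orthproj_idem. Qed.

Lemma inS0 : inS P 0.
Proof. exact: lin0 orthproj_linear. Qed.

Lemma inSD x y : inS P x -> inS P y -> inS P (x + y).
Proof. by rewrite /inS (linD orthproj_linear) => -> ->. Qed.

Lemma inSZ a x : inS P x -> inS P (a *: x).
Proof. by rewrite /inS (linZ orthproj_linear) => ->. Qed.

Lemma inSB x y : inS P x -> inS P y -> inS P (x - y).
Proof. by rewrite /inS (linB orthproj_linear) => -> ->. Qed.

Lemma ip_proj_compl x y : ip (P x) (y - P y) = 0.
Proof. by rewrite ipBr [X in _ - X]orthproj_adj orthproj_idem orthproj_adj subrr. Qed.

Lemma ip_compl_proj x y : ip (x - P x) (P y) = 0.
Proof. by rewrite ipC ip_proj_compl conjC0. Qed.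

Lemma proj_compl0 x : P (x - P x) = 0.
Proof. by rewrite (linB orthproj_linear) orthproj_idem subrr. Qed.

Lemma ip_proj_split x y : ip x y = ip (P x) (P y) + ip (x - P x) (y - P y).
Proof.
have -> : ip x y = ip (P x + (x - P x)) (P y + (y - P y)) by rewrite !(addrC (P _)) !subrK.
rewrite ipDl !(ipDr (P y) (y - P y)).
by rewrite ip_proj_compl ip_compl_proj addr0 add0r.
Qed.

Lemma normsq_proj x : normsq x = normsq (P x) + normsq (x - P x).
Proof. by rewrite /normsq ip_proj_split raddfD. Qed.

Lemma normsq_proj_le x : normsq (P x) <= normsq x.
Proof. by rewrite [leRHS]normsq_proj lerDl normsq_ge0. Qed.

Lemma normsq_compl_le x : normsq (x - P x) <= normsq x.
Proof. by rewrite [leRHS]normsq_proj lerDr normsq_ge0. Qed.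

Lemma inS_closed l :
  (forall e, 0 < e -> exists2 k, inS P k & normsq (l - k) < e) -> inS P l.
Proof.
move=> approx; apply/eqP; rewrite -subr_eq0; apply/eqP.
apply: normsq_small_eq0 => e e0.
have [k k_in lk] := approx (e / 4) (divr_gt0 e0 (ltr0Sn _ 3)).
have -> : P l - l = P (l - k) + (k - l) by rewrite (linB orthproj_linear) k_in addrA subrK.
have := normsqD_le2 (P (l - k)) (k - l).
have := normsq_proj_le (l - k); rewrite (normsq_distC k); lra.
Qed.

End OneProjection.

Lemma orthprojC (P Q : H -> H) : orthproj ip P -> orthproj ip Q ->
  (forall x, P (Q x) = 0) -> forall x, Q (P x) = 0.
Proof.
move=> P_proj Q_proj PQ x; apply: normsq_eq0.
rewrite /normsq orthproj_adj // orthproj_idem // -(orthproj_idem P_proj x).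
by rewrite orthproj_adj // PQ ip0r raddf0.
Qed.

Lemma orthprojD (P Q : H -> H) : orthproj ip P -> orthproj ip Q ->
  (forall x, P (Q x) = 0) -> orthproj ip (fun x => P x + Q x).
Proof.
move=> P_proj Q_proj PQ; have QP := orthprojC P_proj Q_proj PQ.
have P_lin := orthproj_linear P_proj; have Q_lin := orthproj_linear Q_proj.
split=> [a x y|x|x y].
- by rewrite P_lin Q_lin scalerDr addrACA.
- by rewrite linD // linD // PQ QP !orthproj_idem // addr0 add0r.
- by rewrite ipDl ipDr !orthproj_adj.
Qed.

Lemma orthproj_id : orthproj ip id.
Proof. by split. Qed.

Lemma orthproj0 : orthproj ip (fun _ => 0).
Proof. by split=> [a x y|x|x y]; rewrite ?scaler0 ?addr0 ?ip0l ?ip0r. Qed.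

Section Contraction.
Variables (P T : H -> H) (r : R).
Hypotheses (P_proj : orthproj ip P) (r_ge0 : 0 <= r) (r_lt1 : r < 1).
Hypothesis T_stable : forall u, inS P u -> inS P (T u).
Hypothesis T_contr :
  forall u v, inS P u -> inS P v -> normsq (T u - T v) <= r * normsq (u - v).

Let s n := iter n T 0.

Let s_in n : inS P (s n).
Proof. by elim: n => [|n IH]; [exact: inS0 | exact: T_stable]. Qed.

Let normsq_step n : normsq (s n.+1 - s n) <= r ^+ n * normsq (s 1 - s 0).
Proof.
elim: n => [|n IH]; first by rewrite expr0 mul1r.
apply: (@le_trans _ _ (r * normsq (s n.+1 - s n))).
  exact: (T_contr (s_in n.+1) (s_in n)).
by rewrite exprS -mulrA ler_wpM2l.
Qed.

Let u := 1 - r.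
Let u_gt0 : 0 < u. Proof. by rewrite subr_gt0. Qed.
Let rate_lt1 : 0 < 1 - (1 + u) * r.
Proof. by have := mulr_gt0 u_gt0 u_gt0; rewrite /u; nra. Qed.

Let C := (1 + u^-1) * normsq (s 1 - s 0) / (1 - (1 + u) * r).
Let C_ge0 : 0 <= C.
Proof.
by rewrite divr_ge0 ?mulr_ge0 ?normsq_ge0 ?(ltW rate_lt1) // addr_ge0 // invr_ge0 ltW.
Qed.

(* With the weight [u = 1 - r] in [normsqD_le], the bound [C r^n] on the
   tail reproduces itself, because [(1 + u) r < 1]. *)
Let normsq_tail k n : normsq (s (n + k) - s n) <= C * r ^+ n.
Proof.
have C_eq : C * (1 - (1 + u) * r) = (1 + u^-1) * normsq (s 1 - s 0).
  by rewrite /C divfK // gt_eqF.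
elim: k n => [|k IH] n.
  by rewrite addn0 subrr normsq0 mulr_ge0 ?exprn_ge0.
have -> : s (n + k.+1) - s n = (s n.+1 - s n) + (s (n.+1 + k) - s n.+1).
  by rewrite addnS -addSn [RHS]addrC addrA subrK.
apply: le_trans (normsqD_le _ _ u_gt0) _.
have u1_ge0 : 0 <= 1 + u by rewrite addr_ge0 // ltW.
have uV1_ge0 : 0 <= 1 + u^-1 by rewrite addr_ge0 // invr_ge0 ltW.
have head := ler_wpM2l uV1_ge0 (normsq_step n).
have tail := ler_wpM2l u1_ge0 (IH n.+1).
have -> : C * r ^+ n = (1 + u^-1) * (r ^+ n * normsq (s 1 - s 0))
                      + (1 + u) * (C * r ^+ n.+1).
  by rewrite mulrCA -C_eq exprS; ring.
exact: lerD.
Qed.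

Let iterates_cauchy e : 0 < e ->
  exists N, forall m n, (N <= m)%N -> (N <= n)%N -> normsq (s m - s n) < e.
Proof.
move=> e0; have [N CN] := geometric_lt C r_ge0 r_lt1 e0; exists N.
have sorted_case m n : (N <= n)%N -> (n <= m)%N -> normsq (s m - s n) < e.
  move=> Nn /subnKC <-; apply: le_lt_trans (normsq_tail _ _) (le_lt_trans _ CN).
  by rewrite ler_wpM2l // ler_wiXn2l // ltW.
move=> m n Nm Nn; have [nm|mn] := leqP n m; first exact: sorted_case.
by rewrite normsq_distC sorted_case // ltnW.
Qed.

Lemma contraction_fixpoint : exists2 l, inS P l & T l = l.
Proof.
have [l conv] := normsq_complete iterates_cauchy.
have l_in : inS P l.
  apply: inS_closed => // e e0; have [N sN_l] := conv e e0.
  by exists (s N); rewrite // normsq_distC sN_l.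
exists l => //; apply/eqP; rewrite -subr_eq0; apply/eqP.
apply: normsq_small_eq0 => e e0.
have [N sN_l] := conv (e / 4) (divr_gt0 e0 (ltr0Sn _ 3)).
have -> : T l - l = (T l - T (s N)) + (s N.+1 - l) by rewrite addrA subrK.
have := normsqD_le2 (T l - T (s N)) (s N.+1 - l).
have := T_contr l_in (s_in N); rewrite (normsq_distC l (s N)).
have : r * normsq (s N - l) <= normsq (s N - l).
  by rewrite ler_piMl ?normsq_ge0 ?ltW.
have := sN_l N (leqnn N); have := sN_l N.+1 (leqnSn N); lra.
Qed.

End Contraction.

Definition schur_solution (PK W P : H -> H) (z : R[i]) (x y : H) : Prop :=
  inS PK y /\ W y - z *: (y - P y) = x.

Section Unitary.
Variables (P W : H -> H).
Hypotheses (P_proj : orthproj ip P) (W_unitary : unitary_on ip P W).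

Lemma unitary_stable x : inS P x -> inS P (W x).
Proof. by case: W_unitary => _ + _ _; apply. Qed.

Lemma unitaryB x y : inS P x -> inS P y -> W (x - y) = W x - W y.
Proof.
case: W_unitary => W_lin _ _ _ x_in y_in.
by rewrite addrC -scaleN1r W_lin // scaleN1r addrC.
Qed.

Lemma unitary_normsq x : inS P x -> normsq (W x) = normsq x.
Proof. by case: W_unitary => _ _ + _ x_in; rewrite /normsq => ->. Qed.

Section Resolvent.
Variables (Q : H -> H) (z : R[i]).
Hypotheses (Q_proj : orthproj ip Q) (z_lt1 : `|z| < 1).

Let r := complex.Re z ^+ 2 + complex.Im z ^+ 2.
Let r_ge0 : 0 <= r. Proof. by rewrite addr_ge0 ?sqr_ge0. Qed.
Let r_lt1 : r < 1.
Proof. by rewrite -ltcR add_Re2_Im2 exprn_ilt1. Qed.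

Let normsq_resolvent d : normsq (z *: (d - Q d)) <= r * normsq d.
Proof. by rewrite normsqZ ler_wpM2l // normsq_compl_le. Qed.

Let resolventB x u v :
  (x + z *: (u - Q u)) - (x + z *: (v - Q v)) = z *: ((u - v) - Q (u - v)).
Proof.
rewrite opprD addrACA subrr add0r -scalerBr (linB (orthproj_linear Q_proj)).
by rewrite opprD addrACA -opprD.
Qed.

Let schur_solutionE x y : schur_solution P W Q z x y -> W y = x + z *: (y - Q y).
Proof. by case=> _ <-; rewrite subrK. Qed.

Lemma schur_solution_uniq x y1 y2 :
  schur_solution P W Q z x y1 -> schur_solution P W Q z x y2 -> y1 = y2.
Proof.
move=> sol1 sol2; have [y1_in _] := sol1; have [y2_in _] := sol2.
have d_in := inSB P_proj y1_in y2_in.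
have Wd : W (y1 - y2) = z *: ((y1 - y2) - Q (y1 - y2)).
  by rewrite unitaryB // (schur_solutionE sol1) (schur_solutionE sol2) resolventB.
apply/subr0_eq/normsq_eq0/eqP; rewrite eq_le normsq_ge0 andbT.
have := normsq_resolvent (y1 - y2); rewrite -Wd unitary_normsq //.
have := normsq_ge0 (y1 - y2); have := r_lt1; nra.
Qed.

Lemma schur_solution_exists x : (forall y, inS P y -> inS P (Q y)) -> inS P x ->
  exists y, schur_solution P W Q z x y.
Proof.
move=> Q_stable x_in.
pose preimage v u := inS P u /\ W u = v.
pose Winv v := epsilon (inhabits 0) (preimage v).
have WinvP v : inS P v -> preimage v (Winv v).
  by move=> v_in; apply: epsilon_spec; case: W_unitary => _ _ _; apply.
have rhs_in y : inS P y -> inS P (x + z *: (y - Q y)).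
  by move=> y_in; apply/(inSD P_proj x_in)/(inSZ P_proj)/(inSB P_proj y_in)/Q_stable.
pose T y := Winv (x + z *: (y - Q y)).
have T_in y : inS P y -> inS P (T y) by move=> /rhs_in /WinvP [].
have WT y : inS P y -> W (T y) = x + z *: (y - Q y) by move=> /rhs_in /WinvP [].
have T_contr u v : inS P u -> inS P v -> normsq (T u - T v) <= r * normsq (u - v).
  move=> u_in v_in; have Tu := T_in u u_in; have Tv := T_in v v_in.
  rewrite -(unitary_normsq (inSB P_proj Tu Tv)) (unitaryB Tu Tv).
  by rewrite (WT u u_in) (WT v v_in) resolventB.
have [y y_in Ty] := contraction_fixpoint P_proj r_ge0 r_lt1 T_in T_contr.
by exists y; split; rewrite // -{1}Ty WT // addrK.
Qed.

Lemma schurE x y : schur_solution P W Q z x y -> schur P W Q z x = Q y.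
Proof.
move=> sol; rewrite /schur; congr (Q _); apply: (schur_solution_uniq _ sol).
by apply: (epsilon_spec (inhabits 0) (schur_solution P W Q z x)); exists y.
Qed.

End Resolvent.
End Unitary.

Lemma unitary_on_comp (P W1 W2 : H -> H) :
  unitary_on ip P W1 -> unitary_on ip P W2 -> unitary_on ip P (W2 \o W1).
Proof.
case=> W1_lin W1_stable W1_ip W1_onto [W2_lin W2_stable W2_ip W2_onto].
split=> [a x y x_in y_in|x x_in|x y x_in y_in|y y_in] /=.
- by rewrite W1_lin // W2_lin // ; apply: W1_stable.
- exact/W2_stable/W1_stable.
- by rewrite (W2_ip _ _ (W1_stable _ x_in) (W1_stable _ y_in)) W1_ip.
- have [x' [x'_in <-]] := W2_onto y y_in; have [x [x_in <-]] := W1_onto x' x'_in.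
  by exists x.
Qed.

(* [W (+) 1] with respect to [H = ran P (+) ker P]. *)
Definition extend_id (P W : H -> H) x := W (P x) + (x - P x).

Lemma unitary_on_extend_id (P W : H -> H) :
  orthproj ip P -> unitary_on ip P W -> unitary_on ip id (extend_id P W).
Proof.
move=> P_proj W_unitary; have P_lin := orthproj_linear P_proj.
have WP_in x : inS P (W (P x)) by apply/(unitary_stable W_unitary)/inS_proj.
have P_ext x : P (extend_id P W x) = W (P x).
  by rewrite /extend_id (linD P_lin) proj_compl0 // addr0 WP_in.
have ext_compl x : extend_id P W x - P (extend_id P W x) = x - P x.
  by rewrite P_ext /extend_id addrC addKr.
case: W_unitary => W_lin _ W_ip W_onto.
split=> [a x y _ _|//|x y _ _|y _].
- rewrite /extend_id (linD P_lin) (linZ P_lin) W_lin; try exact: inS_proj.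
  by rewrite scalerDr scalerBr opprD [a *: x + y + _]addrACA [LHS]addrACA.
- rewrite (ip_proj_split P_proj) !ext_compl !P_ext W_ip; try exact: inS_proj.
  by rewrite -ip_proj_split.
- have [u [u_in Wu]] := W_onto (P y) (inS_proj P_proj y).
  exists (u + (y - P y)); split => //.
  have Pu : P (u + (y - P y)) = u by rewrite (linD P_lin) proj_compl0 // addr0 u_in.
  by rewrite /extend_id Pu Wu addrAC subrr add0r addrC subrK.
Qed.

Section ThreeBlocks.
Variables (PL PC PR ULC UCR : H -> H).
Hypotheses (PL_proj : orthproj ip PL) (PC_proj : orthproj ip PC) (PR_proj : orthproj ip PR).
Hypothesis P_sum : forall x, PL x + PC x + PR x = x.
Hypothesis P_orth : forall x, PL (PC x) = 0 /\ PL (PR x) = 0 /\ PC (PL x) = 0 /\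
  PC (PR x) = 0 /\ PR (PL x) = 0 /\ PR (PC x) = 0.

Let PLC x := PL x + PC x.
Let PCR x := PC x + PR x.
Hypotheses (ULC_unitary : unitary_on ip PLC ULC) (UCR_unitary : unitary_on ip PCR UCR).

Let U x := ULC (PLC (PL x + UCR (PCR x))) + PR (PL x + UCR (PCR x)).

Let PL_PC x : PL (PC x) = 0. Proof. by case: (P_orth x). Qed.
Let PL_PR x : PL (PR x) = 0. Proof. by case: (P_orth x) => _ []. Qed.
Let PC_PL x : PC (PL x) = 0. Proof. by case: (P_orth x) => _ [_ []]. Qed.
Let PC_PR x : PC (PR x) = 0. Proof. by case: (P_orth x) => _ [_ [_ []]]. Qed.
Let PR_PL x : PR (PL x) = 0. Proof. by case: (P_orth x) => _ [_ [_ [_ []]]]. Qed.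
Let PR_PC x : PR (PC x) = 0. Proof. by case: (P_orth x) => _ [_ [_ [_ []]]]. Qed.

Let compl_CR x : x - PCR x = PL x.
Proof. by rewrite /PCR -{1}(P_sum x) -[PL x + _ + _]addrA addrK. Qed.

Let compl_LC x : x - PLC x = PR x.
Proof. by rewrite /PLC -{1}(P_sum x) addrAC subrr add0r. Qed.

Lemma unitary_on_three_blocks : unitary_on ip id U.
Proof.
have -> : U = extend_id PLC ULC \o extend_id PCR UCR.
  apply: functional_extensionality => x.
  by rewrite /U /= /extend_id compl_CR compl_LC (addrC (PL x)).
apply: unitary_on_comp; apply: unitary_on_extend_id => //; exact: orthprojD.
Qed.

Variables (QL QR : H -> H).
Hypotheses (QL_proj : orthproj ip QL) (QL_sub : forall x, PL (QL x) = QL x).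
Hypotheses (QR_proj : orthproj ip QR) (QR_sub : forall x, PR (QR x) = QR x).

Let PV x := QL x + PC x + QR x.
Let PVLC x := QL x + PC x.
Let PVCR x := PC x + QR x.

Let PC_QL x : PC (QL x) = 0. Proof. by rewrite -QL_sub PC_PL. Qed.
Let PR_QL x : PR (QL x) = 0. Proof. by rewrite -QL_sub PR_PL. Qed.
Let PL_QR x : PL (QR x) = 0. Proof. by rewrite -QR_sub PL_PR. Qed.
Let PC_QR x : PC (QR x) = 0. Proof. by rewrite -QR_sub PC_PR. Qed.
Let QL_PC := orthprojC PC_proj QL_proj PC_QL.
Let QL_PR := orthprojC PR_proj QL_proj PR_QL.
Let QR_PL := orthprojC PL_proj QR_proj PL_QR.
Let QR_PC := orthprojC PC_proj QR_proj PC_QR.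
Let QL_QR x : QL (QR x) = 0. Proof. by rewrite -QR_sub QL_PR. Qed.
Let QR_QL x : QR (QL x) = 0. Proof. by rewrite -QL_sub QR_PL. Qed.
Let QL_PL x : QL (PL x) = QL x.
Proof. by rewrite -{2}(P_sum x) !(linD (orthproj_linear QL_proj)) QL_PC QL_PR !addr0. Qed.
Let QR_PR x : QR (PR x) = QR x.
Proof. by rewrite -{2}(P_sum x) !(linD (orthproj_linear QR_proj)) QR_PL QR_PC !add0r. Qed.

Let blockE := (PL_PC, PL_PR, PC_PL, PC_PR, PR_PL, PR_PC, PC_QL, PR_QL, PL_QR, PC_QR,
  QL_PC, QL_PR, QR_PL, QR_PC, QL_QR, QR_QL, QL_PL, QR_PR, QL_sub, QR_sub,
  orthproj_idem PL_proj, orthproj_idem PC_proj, orthproj_idem PR_proj,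
  orthproj_idem QL_proj, orthproj_idem QR_proj).
Let linE := (linD (orthproj_linear PL_proj), linN (orthproj_linear PL_proj),
  linZ (orthproj_linear PL_proj), linD (orthproj_linear PC_proj),
  linN (orthproj_linear PC_proj), linZ (orthproj_linear PC_proj),
  linD (orthproj_linear PR_proj), linN (orthproj_linear PR_proj),
  linZ (orthproj_linear PR_proj), linD (orthproj_linear QL_proj),
  linN (orthproj_linear QL_proj), linZ (orthproj_linear QL_proj),
  linD (orthproj_linear QR_proj), linN (orthproj_linear QR_proj),
  linZ (orthproj_linear QR_proj), lin0 (orthproj_linear PL_proj),
  lin0 (orthproj_linear PC_proj), lin0 (orthproj_linear PR_proj),
  lin0 (orthproj_linear QL_proj), lin0 (orthproj_linear QR_proj)).

Let block_ext w1 w2 : PL w1 = PL w2 -> PC w1 = PC w2 -> PR w1 = PR w2 -> w1 = w2.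
Proof. by move=> eL eC eR; rewrite -[w1]P_sum -[w2]P_sum eL eC eR. Qed.

Let simpE := (addr0, add0r, subr0, sub0r, subrr, oppr0, scaler0).

Let PR_LC a : inS PLC a -> PR a = 0.
Proof. by move=> <-; rewrite !linE !blockE addr0. Qed.

Let PL_CR b : inS PCR b -> PL b = 0.
Proof. by move=> <-; rewrite !linE !blockE addr0. Qed.

Let QL_CR b : inS PCR b -> QL b = 0.
Proof. by move=> <-; rewrite !linE !blockE addr0. Qed.

Lemma schur_solution_glue z x a b :
  inS PV x ->
  schur_solution PLC ULC PVLC z (PVLC x) a ->
  schur_solution PCR UCR PVCR z (PVCR (PVLC a + QR x)) b ->
  schur_solution id U PV z x (PL a + b).
Proof.
move=> x_in [a_in ea] [b_in eb]; split; first by [].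
have a_eq : PL a + PC a = a := a_in.
have b_eq : PC b + PR b = b := b_in.
have PR_a := PR_LC a_in; have PL_b := PL_CR b_in; have QL_b := QL_CR b_in.
have ULC_a : ULC a = PVLC x + z *: (a - PVLC a) by rewrite -ea subrK.
have UCR_b : UCR b = PC a + QR x + z *: (PR b - QR b).
  rewrite -[UCR b](subrK (z *: (b - PVCR b))) eb; congr (_ + _ *: _).
    by rewrite /PVCR /PVLC !linE !blockE ?simpE.
  by rewrite /PVCR -{1}b_eq opprD addrACA subrr add0r.
have Uc : U (PL a + b) = ULC a + (QR x + z *: (PR b - QR b)).
  rewrite /U; have -> : PCR (PL a + b) = b by rewrite /PCR !linE !blockE !simpE.
  by rewrite UCR_b /PLC !linE !blockE PL_b !simpE a_eq.
have c_compl : PL a + b - PV (PL a + b) = (a - PVLC a) + (PR b - QR b).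
  by apply: block_ext; rewrite !linE !blockE ?(PL_b, QL_b, PR_a) ?linE !simpE.
rewrite Uc ULC_a c_compl (scalerDr z (a - PVLC a)) [PVLC x + _ + _]addrACA addrK.
exact: x_in.
Qed.

Let PV_glue a b x :
  inS PLC a -> inS PCR b -> PV (PL a + b) = QL (PVLC a + QR x) + PVCR b.
Proof.
move=> a_in b_in; have QL_b := QL_CR b_in.
by rewrite /PV /PVLC /PVCR !linE !blockE QL_b !simpE addrA.
Qed.

Let PVLC_in w : inS PLC (PVLC w).
Proof. by rewrite /inS /PLC /PVLC !linE !blockE !simpE. Qed.

Let PVCR_in w : inS PCR (PVCR w).
Proof. by rewrite /inS /PCR /PVCR !linE !blockE !simpE. Qed.

Lemma schur_three_blocks z : `|z| < 1 -> forall x, inS PV x ->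
  let y := schur PLC ULC PVLC z (PVLC x) + QR x in
  schur id U PV z x = QL y + schur PCR UCR PVCR z (PVCR y).
Proof.
move=> z_lt1 x x_in y.
have PLC_proj : orthproj ip PLC := orthprojD PL_proj PC_proj PL_PC.
have PCR_proj : orthproj ip PCR := orthprojD PC_proj PR_proj PC_PR.
have PVLC_proj : orthproj ip PVLC := orthprojD QL_proj PC_proj QL_PC.
have PVCR_proj : orthproj ip PVCR := orthprojD PC_proj QR_proj PC_QR.
have PV_proj : orthproj ip PV.
  by apply: orthprojD PVLC_proj QR_proj _ => w; rewrite /PVLC QL_QR PC_QR addr0.
have [a a_sol] := schur_solution_exists PLC_proj ULC_unitary PVLC_proj z_lt1
  (fun w _ => PVLC_in w) (PVLC_in x).
have [b b_sol] := schur_solution_exists PCR_proj UCR_unitary PVCR_proj z_lt1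
  (fun w _ => PVCR_in w) (PVCR_in y).
have y_eq : y = PVLC a + QR x.
  by rewrite /y (schurE PLC_proj ULC_unitary PVLC_proj z_lt1 a_sol).
rewrite (schurE PCR_proj UCR_unitary PVCR_proj z_lt1 b_sol) y_eq.
rewrite y_eq in b_sol.
rewrite (schurE orthproj_id unitary_on_three_blocks PV_proj z_lt1
  (schur_solution_glue x_in a_sol b_sol)).
by apply: PV_glue; [case: a_sol | case: b_sol].
Qed.

End ThreeBlocks.

End InnerProduct.

Theorem theorem2p5 (R : realType) (H : lmodType R[i]) (ip : H -> H -> R[i])
  (PL PC PR ULC UCR : H -> H) :
  is_hilbert ip ->
  (* orthogonal decomposition H = H_L (+) H_C (+) H_R *)
  orthproj ip PL -> orthproj ip PC -> orthproj ip PR ->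
  (forall x, PL x + PC x + PR x = x) ->
  (forall x, PL (PC x) = 0 /\ PL (PR x) = 0 /\ PC (PL x) = 0 /\
             PC (PR x) = 0 /\ PR (PL x) = 0 /\ PR (PC x) = 0) ->
  (* U_LC unitary on H_LC = H_L (+) H_C, U_CR unitary on H_CR = H_C (+) H_R *)
  unitary_on ip (fun x => PL x + PC x) ULC ->
  unitary_on ip (fun x => PC x + PR x) UCR ->
  let PLC := fun x => PL x + PC x in
  let PCR := fun x => PC x + PR x in
  (* U = (U_LC (+) 1_{H_R}) (1_{H_L} (+) U_CR) *)
  let U := fun x => (fun y => ULC (PLC y) + PR y) (PL x + UCR (PCR x)) in
  (forall QL QR : H -> H,
     orthproj ip QL -> (forall x, PL (QL x) = QL x) ->   (* V_L closed in H_L *)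
     orthproj ip QR -> (forall x, PR (QR x) = QR x) ->   (* V_R closed in H_R *)
     let PV := fun x => QL x + PC x + QR x in            (* V = V_L (+) H_C (+) V_R *)
     let PVLC := fun x => QL x + PC x in                 (* V_LC = V_L (+) H_C *)
     let PVCR := fun x => PC x + QR x in                 (* V_CR = H_C (+) V_R *)
     forall z : R[i], `|z| < 1 -> forall x, inS PV x ->
       let y := schur PLC ULC PVLC z (PVLC x) + QR x in   (* (f^L (+) 1_{V_R}) x *)
       schur id U PV z x = QL y + schur PCR UCR PVCR z (PVCR y))
  /\
  (forall z : R[i], `|z| < 1 -> forall x, inS PC x ->
     schur id U PC z x = schur PCR UCR PC z (schur PLC ULC PC z x)).
Proof.
move=> hilbertH PL_proj PC_proj PR_proj P_sum P_orth ULC_unitary UCR_unitary PLC PCR U.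
have glue := schur_three_blocks hilbertH PL_proj PC_proj PR_proj P_sum P_orth
  ULC_unitary UCR_unitary.
split; first exact: glue.
move=> z z_lt1 x x_in.
have PL0 := lin0 (orthproj_linear PL_proj); have PR0 := lin0 (orthproj_linear PR_proj).
have := glue _ _ (orthproj0 hilbertH) (fun _ => PL0) (orthproj0 hilbertH) (fun _ => PR0)
  z z_lt1 x.
have PC_l : (fun w => 0 + PC w) = PC.
  by apply: functional_extensionality => w; rewrite add0r.
have PC_r : (fun w => PC w + 0) = PC.
  by apply: functional_extensionality => w; rewrite addr0.
have PC_lr : (fun w => 0 + PC w + 0) = PC.
  by apply: functional_extensionality => w; rewrite add0r addr0.
rewrite PC_lr PC_l PC_r => /(_ x_in) /=; rewrite !add0r !addr0 x_in => ->.
by rewrite [in LHS]/schur (orthproj_idem PC_proj).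
Qed.
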